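(* (Feinstein lemma for noisy computation.) Let $A$ and $C$ be standard alphabets and $B$ a countable standard alphabet. Let $[A,f\times F,B\times C]$ be a noisy computation and $[A,X]$ a source with $P_{f(X)F(X)}\ll P_{f(X)}\times P_{F(X)}$. Let $i_{f(X)F(X)}=\ln\frac{dP_{f(X)F(X)}}{d(P_{f(X)}\times P_{F(X)})}$. Then for every $M\in\mathbb N$ and every $a>0$ such that $Me^{-a}+P_{f(X)F(X)}(i_{f(X)F(X)}\le a)<\frac14$, and for any $\epsilon\in(0,\frac12)$, $\lambda\in(0,\frac12)$ with $\epsilon\lambda=Me^{-a}+P_{f(X)F(X)}(i_{f(X)F(X)}\le a)$, there exist points $y_1,\dots,y_M\in B^{\mathbb N}$, pairwise disjoint sets $\Gamma_1,\dots,\Gamma_M\in\mathcal B_{C^{\mathbb N}}$ and sets $A_k\in\mathcal B_{A^{\mathbb N}}$ with $A_k\subset f^{-1}(y_k)$ such that for all $k=1,\dots,M$: $P_{X|f(X)}(A_k\mid y_k)>1-\lambda$, and $P_{F(X)|X}(\Gamma_k^c\mid x)\le\epsilon$ for all $x\in A_k$.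
   Context: Sequence spaces $A^{\mathbb N},B^{\mathbb N},C^{\mathbb N}$ carry product $\sigma$-fields. A source $[A,X]$ is a random process with distribution $P_X$ on $A^{\mathbb N}$. A channel $[A,F,C]$ is a probability kernel $F(x,H)=P_{F(X)|X}(H|x)$. Given a measurable $f:A^{\mathbb N}\to B^{\mathbb N}$ and a channel $[A,F,C]$, the noisy computation $[A,f\times F,B\times C]$ is the channel product with kernel $(x,G\times H)\mapsto 1_{f^{-1}(G)}(x)F(x,H)$; fed by $X$ it determines the joint process $(X,f(X),F(X))$ with law $P(E\times G\times H)=\int_E1_G(f(x))F(x,H)\,dP_X(x)$, and $P_{f(X)F(X)}$, $P_{f(X)}$, $P_{F(X)}$ denote the corresponding marginals. $P_{X|f(X)}(\cdot|y)$ denotes a regular conditional distribution of $X$ given $f(X)=y$ (singletons of $B^{\mathbb N}$ are measurable since $B$ is countable). *)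

From HB Require Import structures.
From mathcomp Require Import all_boot all_order all_algebra.
From mathcomp Require Import all_classical all_reals all_analysis measurable_realfun.
Set Implicit Arguments. Unset Strict Implicit. Unset Printing Implicit Defensive.
Import Order.TTheory GRing.Theory Num.Theory.
Import numFieldNormedType.Exports.
Local Open Scope classical_set_scope.
Local Open Scope ring_scope.

Definition standard_borel (R : realType) d (T : measurableType d) : Prop :=
  exists (S : set R) (phi : T -> R) (psi : R -> T),
    [/\ measurable S, measurable_fun setT phi, measurable_fun S psi,
        (forall x, S (phi x) /\ psi (phi x) = x) &
        (forall r, S r -> phi (psi r) = r)].

Definition seq_gen d (T : measurableType d) : set (set (nat -> T)) :=
  [set E | exists n : nat, exists2 S : set T, measurable S &
                                   E = (fun x => x n) @^-1` S].

Definition seqspace d (T : measurableType d) := g_sigma_algebraType (@seq_gen d T).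

Local Open Scope ereal_scope.

Section outdist.
Context d d' (X : measurableType d) (Y : measurableType d') (R : realType)
  (P : probability X R) (F : R.-pker X ~> Y).

Definition outdist (H : set Y) : \bar R := \int[P]_x F x H.

Let outdist0 : outdist set0 = 0.
Proof. by apply: integral0_eq => x _; rewrite measure0. Qed.

Let outdist_ge0 H : 0 <= outdist H.
Proof. by apply: integral_ge0 => x _; exact: measure_ge0. Qed.

Let outdist_sigma_additive : semi_sigma_additive outdist.
Proof.
move=> U mU tU mUU; rewrite [X in _ --> X](_ : _ =
  \int[P]_x (\sum_(n <oo) F x (U n))); last first.
  apply: eq_integral => V _.
  by apply/esym/cvg_lim => //; exact/measure_semi_sigma_additive.
apply/cvg_closeP; split.
  by apply: is_cvg_nneseries => n _ _; exact: integral_ge0.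
rewrite closeE// integral_nneseries// => n.
exact: (measurable_kernel F _ (mU n)).
Qed.

HB.instance Definition _ := isMeasure.Build _ _ R
  outdist outdist0 outdist_ge0 outdist_sigma_additive.

Let outdist_setT : outdist setT = 1.
Proof.
rewrite /outdist (eq_integral (cst 1)); last by move=> x _; rewrite prob_kernel.
rewrite integral_cst// mul1e; exact: probability_setT.
Qed.

HB.instance Definition _ := Measure_isProbability.Build _ _ R outdist outdist_setT.

End outdist.

(* Joint law P_{f(X)F(X)} of the noisy computation fed by X:
   P_{f(X)F(X)}(W) = \int F(x, {c | (f x, c) \in W}) dP_X(x),
   the unique measure with P(G x H) = \int 1_G(f x) F(x,H) dP_X(x). *)
Definition joint_out d dB d' (X : measurableType d) (B : measurableType dB)
  (Y : measurableType d') (R : realType)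
  (P : probability X R) (f : X -> B) (F : R.-pker X ~> Y)
  (W : set (B * Y)) : \bar R :=
  \int[P]_x F x [set c | W (f x, c)].

Definition is_RN_derivative d (T : measurableType d) (R : realType)
  (nu : set T -> \bar R) (mu : {measure set T -> \bar R}) (g : T -> \bar R) :=
  [/\ measurable_fun [set: T] g, (forall z, 0 <= g z) &
      forall W, measurable W -> nu W = \int[mu]_(z in W) g z].

Definition eln (R : realType) (z : \bar R) : \bar R :=
  match z with
  | r%:E => if (0 < r)%R then (ln r)%:E else -oo
  | +oo => +oo
  | -oo => -oo
  end.

Definition is_rcd d dB (X : measurableType d) (B : measurableType dB)
  (R : realType) (P : probability X R) (f : {mfun X >-> B})
  (Q : R.-pker B ~> X) :=
  forall E G, measurable E -> measurable G ->
    P (E `&` f @^-1` G) = \int[distribution P f]_(y in G) Q y E.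

From HB Require Import structures.
From mathcomp Require Import all_boot all_order all_algebra.
From mathcomp Require Import all_classical all_reals all_analysis measurable_realfun.
From mathcomp Require Import lra.
Import Order.TTheory GRing.Theory Num.Theory.
Local Open Scope classical_set_scope.
Local Open Scope ring_scope.
Local Open Scope ereal_scope.
Set Implicit Arguments. Unset Strict Implicit.

(* Feinstein's greedy construction.  Let T = {i <= a} and, for y in B^N, let
   the candidate decoding set be the section (~T)_y; since
   dP_{f(X)F(X)} > e^a d(P_{f(X)} x P_{F(X)}) off T, these sections have
   P_{F(X)}-measure at most e^{-a} for P_{f(X)}-a.e. y.  Codewords are chosen
   one at a time, removing from each new section the union U of the previous
   decoding sets.  If no further codeword exists, then for a.e. y the inputs x
   whose output falls in T_{f(x)} or U with probability at most eps carry
   P_{X|f(X)}(.|y)-mass at most 1 - lam; here countability of B is used: it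
   makes P_{X|f(X)}(.|y) live on the fiber f^{-1}(y) for a.e. y.  Integrating
   over y, the remaining inputs have P-mass at least lam, so
   eps lam <= P_{f(X)F(X)}(T) + P_{F(X)}(U) <= P_{f(X)F(X)}(T) + k e^{-a},
   which contradicts the choice of eps lam as long as k < M. *)

Section ae_le_of_integral.
Context d (T : measurableType d) (R : realType)
  (mu : {finite_measure set T -> \bar R}).

Lemma ae_le_of_integral_le (D : set T) (h : T -> \bar R) (c : R) :
  (0 <= c)%R -> measurable D -> measurable_fun setT h -> (forall y, 0 <= h y) ->
  (forall G, measurable G -> G `<=` D ->
    \int[mu]_(y in G) h y <= c%:E * mu G) ->
  {ae mu, forall y, D y -> h y <= c%:E}.
Proof.
move=> c0 mD mh h0 hD.
pose G n := D `&` [set y | (c + n.+1%:R^-1)%:E < h y].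
have mG n : measurable (G n).
  by apply: measurableI mD _; rewrite -[X in measurable X]setTI;
    exact: emeasurable_fun_o_infty.
have G0 n : mu.-negligible (G n).
  apply/negligibleP => //; apply/eqP; rewrite -measure_le0.
  have /fineK muG := fin_num_measure mu _ (mG n).
  have : (c + n.+1%:R^-1)%:E * mu (G n) <= c%:E * mu (G n).
    apply: le_trans (hD _ (mG n) (@subIsetl _ _ _)).
    rewrite -integral_cst//; apply: ge0_le_integral => //.
    - by move=> y _; rewrite lee_fin addr_ge0.
    - exact: measurable_funS mh.
    - by move=> y [_ /ltW].
  rewrite -muG -!EFinM !lee_fin mulrDl gerDl pmulr_rle0 ?invr_gt0 ?ltr0n//.
  by rewrite -lee_fin muG.
apply: negligibleS (negligible_bigcup G0) => y /= /not_implyP[Dy].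
move/negP; rewrite -ltNge; case E : (h y) => [r| |] cy.
- have [k hk] := ltr_add_invr (cy : (c < r)%R).
  by exists k => //; split => //=; rewrite E lte_fin.
- by exists 0%N => //; split => //=; rewrite E ltry.
- by have := h0 y; rewrite E.
Qed.

End ae_le_of_integral.

Section joint_law.
Context (R : realType) dX dY dZ (X : measurableType dX) (Y : measurableType dY)
  (Z : measurableType dZ) (P : probability X R) (f : {mfun X >-> Z})
  (F : R.-pker X ~> Y).
Local Notation J := (joint_out P f F).

Lemma measurable_slice (W : set (Z * Y)) z :
  measurable W -> measurable [set c | W (z, c)].
Proof.
move=> mW; have := measurable_xsection z mW; congr measurable.
by apply/seteqP; split => c; rewrite /xsection/= inE.
Qed.

Lemma measurable_fun_kernel_slice (W : set (Z * Y)) : measurable W ->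
  measurable_fun setT (fun x => F x [set c | W (f x, c)]).
Proof.
move=> mW; pose fW := (fun p : X * Y => (f p.1, p.2)) @^-1` W.
have mfW : measurable fW.
  rewrite -[fW]setTI; apply: (measurable_fun_pair _ measurable_snd) => //.
  exact: measurableT_comp (measurable_funPT f) measurable_fst.
have := measurable_fun_xsection_finite_kernel F (mem_set mfW).
congr measurable_fun; apply/funext => x; congr (F x _).
by apply/seteqP; split => c; rewrite /xsection/= inE.
Qed.

Lemma le_joint_out W1 W2 : measurable W1 -> measurable W2 -> W1 `<=` W2 ->
  J W1 <= J W2.
Proof.
move=> mW1 mW2 W12; apply: ge0_le_integral => //;
  try exact: measurable_fun_kernel_slice.
by move=> x _; apply: le_measure; rewrite ?inE; try exact: measurable_slice;
  move=> c; exact: W12.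
Qed.

Lemma joint_outU W1 W2 : measurable W1 -> measurable W2 ->
  J (W1 `|` W2) <= J W1 + J W2.
Proof.
move=> mW1 mW2; rewrite /joint_out -ge0_integralD//;
  try exact: measurable_fun_kernel_slice.
apply: ge0_le_integral => //.
- exact/measurable_fun_kernel_slice/measurableU.
- by apply: emeasurable_funD; exact: measurable_fun_kernel_slice.
- by move=> x _; apply: measureU2; exact: measurable_slice.
Qed.

Lemma joint_out_setXT G : measurable G -> J (G `*` setT) = distribution P f G.
Proof.
move=> mG; have mfG : measurable (f @^-1` G).
  by rewrite -[X in measurable X]setTI; exact: measurable_funPT.
rewrite /joint_out -[distribution P f G]/(P (f @^-1` G)).
rewrite -(setIT (f @^-1` G)) -integral_indic//.
apply: eq_integral => x _; rewrite indicE.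
have [/set_mem Gfx|/negP nGfx] := boolP (x \in f @^-1` G).
  by rewrite (_ : [set c | _] = setT) ?prob_kernel//; apply/seteqP; split.
rewrite (_ : [set c | _] = set0) ?measure0//.
by apply/seteqP; split => c // [Gfx _]; apply: nGfx; exact/mem_set.
Qed.

Lemma joint_out_setTX U : J (setT `*` U) = outdist P F U.
Proof.
by apply: eq_integral => x _; congr (F x _); apply/seteqP; split => c // [].
Qed.

End joint_law.

Lemma eln_le_expR (R : realType) (z : \bar R) (a : R) :
  0 <= z -> (eln z <= a%:E) = (z <= (expR a)%:E).
Proof.
case: z => [r| |] //= r0; case: ifPn => [r_gt0|].
  by rewrite !lee_fin -ler_expR lnK.
rewrite -leNgt => r_le0; rewrite leNye; apply/esym; rewrite lee_fin.
by apply: le_trans r_le0 _; exact/ltW/expR_gt0.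
Qed.

Lemma ae_outdist_section_le (R : realType) dX dY dZ (X : measurableType dX)
  (Y : measurableType dY) (Z : measurableType dZ) (P : probability X R)
  (f : {mfun X >-> Z}) (F : R.-pker X ~> Y) (g : Z * Y -> \bar R) (c : R) :
  is_RN_derivative (joint_out P f F) (distribution P f \x outdist P F) g ->
  (0 < c)%R ->
  {ae distribution P f,
    forall y, outdist P F (xsection [set z | c%:E < g z] y) <= c^-1%:E}.
Proof.
move=> [mg g0 dJ] c_gt0; set S := [set z | _ < _].
have mS : measurable S by rewrite -[S]setTI; exact: emeasurable_fun_o_infty.
suff : {ae distribution P f, forall y, setT y ->
    outdist P F (xsection S y) <= c^-1%:E} by apply: filterS => y; apply.
apply: ae_le_of_integral_le => //; first by rewrite invr_ge0 ltW.
  exact: measurable_fun_xsection.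
move=> G mG _; have mSG : measurable (S `&` G `*` setT).
  by apply: measurableI => //; exact: measurableX.
have -> : \int[distribution P f]_(y in G) outdist P F (xsection S y) =
    (distribution P f \x outdist P F) (S `&` G `*` setT).
  rewrite /product_measure1 integral_mkcond; apply: eq_integral => y _.
  rewrite patchE /= xsectionI; case: ifPn => yG.
    by rewrite in_xsectionX// setIT.
  by rewrite notin_xsectionX// setI0 measure0.
have : c%:E * (distribution P f \x outdist P F) (S `&` G `*` setT) <=
    distribution P f G.
  rewrite -(joint_out_setXT P f F)// -integral_cst//.
  apply: le_trans (le_joint_out P f F mSG _ (@subIsetr _ _ _));
    last exact: measurableX.
  rewrite dJ//.
  apply: ge0_le_integral => //.
  - by move=> z _; rewrite lee_fin ltW.
  - exact: measurable_funS mg.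
  - by move=> z [/ltW].
set m := (_ \x _) _ => cm.
rewrite -[m]mul1e -(mulVf (lt0r_neq0 c_gt0)) EFinM -muleA.
by apply: lee_wpmul2l => //; rewrite lee_fin invr_ge0 ltW.
Qed.

Section rcd_fibers.
Context (R : realType) dX dZ (X : measurableType dX) (Z : measurableType dZ)
  (P : probability X R) (f : {mfun X >-> Z}) (Q : R.-pker Z ~> X).
Hypothesis hQ : is_rcd P f Q.

Lemma rcd_ae_preimage (S : set Z) : measurable S ->
  {ae distribution P f, forall y, S y -> Q y (f @^-1` ~` S) = 0}.
Proof.
move=> mS; have mfS : measurable (f @^-1` ~` S).
  by rewrite -[X in measurable X]setTI; exact/measurable_funPT/measurableC.
suff : {ae distribution P f, forall y, S y -> Q y (f @^-1` ~` S) <= 0%R%:E}.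
  by apply: filterS => y + Sy => /(_ Sy); rewrite measure_le0 => /eqP.
apply: ae_le_of_integral_le => //; first exact: measurable_kernel.
move=> G mG GS; rewrite mul0e -(hQ mfS mG).
rewrite (_ : _ `&` _ = set0) ?measure0//.
by apply/seteqP; split => // x [/= nSx /GS].
Qed.

End rcd_fibers.

Section seqspace_fibers.
Context (R : realType) dB (B : measurableType dB).
Hypothesis mB1 : forall b : B, measurable [set b].

Lemma measurable_coord_eq n (b : B) : measurable [set y : seqspace B | y n = b].
Proof.
by apply: sub_sigma_algebra; exists n, [set b] => //; apply/seteqP; split.
Qed.

Lemma seqspace_measurable_set1 (y : seqspace B) : measurable [set y].
Proof.
have -> : [set y] = \bigcap_n [set z : seqspace B | z n = y n].
  by apply/seteqP; split => [z -> //|z yz]; apply/funext => n; exact: yz.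
by apply: bigcapT_measurable => n; exact: measurable_coord_eq.
Qed.

Hypothesis cntB : countable [set: B].

Lemma rcd_ae_fiber dX (X : measurableType dX) (P : probability X R)
    (f : {mfun X >-> seqspace B}) (Q : R.-pker seqspace B ~> X) :
  is_rcd P f Q ->
  {ae distribution P f, forall y, Q y (~` (f @^-1` [set y])) = 0}.
Proof.
move=> hQ; have /countable_injP[e e_inj] := cntB.
pose cyl n (b : B) := [set y : seqspace B | y n = b].
have cyl0 n m : {ae distribution P f, forall y b,
    e b = m -> y n = b -> Q y (f @^-1` ~` cyl n b) = 0}.
  have [[b ebm]|nb] := pselect (exists b, e b = m); last first.
    by apply: aeW => y b ebm; case: nb; exists b.
  apply: filterS (rcd_ae_preimage hQ (measurable_coord_eq n b)).
  move=> y hy b' eb'm ynb'; have <- : b = b'.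
    by apply: e_inj; rewrite ?in_setT// ebm eb'm.
  by apply: hy; rewrite /= ynb'; apply: e_inj; rewrite ?in_setT// ebm eb'm.
apply: filterS (ae_foralln (fun n => ae_foralln (cyl0 n))) => y hy.
have mfib : measurable (~` (f @^-1` [set y])).
  apply: measurableC; rewrite -[X in measurable X]setTI.
  exact: measurable_funPT (seqspace_measurable_set1 y).
apply: measure_negligible mfib _.
have mcyl n : measurable (f @^-1` ~` cyl n (y n)).
  rewrite -[X in measurable X]setTI.
  apply: measurable_funPT => //.
  by apply: measurableC; exact: measurable_coord_eq.
apply: negligibleS (negligible_bigcup (fun n => (negligibleP _ (mcyl n)).2
  (hy n (e (y n)) (y n) erefl erefl))).
move=> x /= nfx; apply: contrapT => hx; apply: nfx; apply/funext => n.
by apply: contrapT => hn; apply: hx; exists n.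
Qed.

End seqspace_fibers.

Lemma standard_borel_measurable_set1 (R : realType) d (T : measurableType d) :
  standard_borel R T -> forall t : T, measurable [set t].
Proof.
move=> [S [phi [psi [_ mphi _ psiK _]]]] t.
have -> : [set t] = phi @^-1` [set phi t].
  apply/seteqP; split => [x -> //|x /= phixt].
  by rewrite -(psiK x).2 phixt (psiK t).2.
by rewrite -[X in measurable X]setTI; apply: mphi => //; exact: measurable_set1.
Qed.

Section feinstein.
Context (R : realType) dX dY dZ (X : measurableType dX) (Y : measurableType dY)
  (Z : measurableType dZ) (P : probability X R) (f : {mfun X >-> Z})
  (F : R.-pker X ~> Y) (Q : R.-pker Z ~> X).
Hypothesis hQ : is_rcd P f Q.
Hypothesis mZ1 : forall z : Z, measurable [set z].
Hypothesis Q_fiber :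
  {ae distribution P f, forall y, Q y (~` (f @^-1` [set y])) = 0}.
Variables (T : set (Z * Y)) (delta eps lam : R).
Hypothesis mT : measurable T.
Hypothesis T_section :
  {ae distribution P f, forall y, outdist P F (xsection (~` T) y) <= delta%:E}.
Hypotheses (eps_ge0 : (0 <= eps)%R) (lam_le1 : (lam <= 1)%R).

Definition feinstein_codeword (y : Z) (G : set Y) (A : set X) :=
  [/\ measurable G, outdist P F G <= delta%:E, measurable A,
      A `<=` f @^-1` [set y] &
      (1 - lam)%:E < Q y A /\ forall x, A x -> F x (~` G) <= eps%:E].

Definition low_error_inputs (U : set Y) :=
  [set x | F x [set c | (T `|` setT `*` U) (f x, c)] <= eps%:E].

Lemma measurable_low_error_inputs U : measurable U ->
  measurable (low_error_inputs U).
Proof.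
move=> mU; rewrite -[X in measurable X]setTI.
apply: emeasurable_fun_infty_c => //; apply: measurable_fun_kernel_slice.
by apply: measurableU => //; exact: measurableX.
Qed.

Lemma rcd_low_error_inputs_le U : measurable U ->
  ~ (exists y G A, feinstein_codeword y G A /\ G `&` U = set0) ->
  {ae distribution P f, forall y, Q y (low_error_inputs U) <= (1 - lam)%:E}.
Proof.
move=> mU no_codeword; apply: filterS2 Q_fiber T_section => y Qy nuy.
rewrite leNgt; apply/negP => QyD; apply: no_codeword.
have mD := measurable_low_error_inputs mU.
have mfy : measurable (f @^-1` [set y]).
  by rewrite -[X in measurable X]setTI; exact: measurable_funPT.
have mTy : measurable (xsection (~` T) y).
  exact/measurable_xsection/measurableC.
exists y, (xsection (~` T) y `\` U), (low_error_inputs U `&` f @^-1` [set y]).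
split; last by apply/seteqP; split => // c [[]].
split; [exact: measurableD|..|exact: measurableI|exact: subIsetr|split].
- apply: le_trans nuy; apply: le_measure; rewrite ?inE; last exact: subDsetl.
    exact: measurableD.
  exact: mTy.
- apply: lt_le_trans QyD _.
  rewrite -[in leLHS](setIT (low_error_inputs U)) -(setUCr (f @^-1` [set y])).
  rewrite setIUr; apply: le_trans (measureU2 _ _ _) _;
    [exact: measurableI|exact/measurableI/measurableC|].
  rewrite [X in _ + X](@subset_measure0 _ _ _ _ _ (~` (f @^-1` [set y])))//.
  - by rewrite adde0.
  - exact/measurableI/measurableC.
  - exact: measurableC.
- move=> x [Dx /= fxy]; apply: le_trans Dx; rewrite fxy.
  apply: le_measure; rewrite ?inE; first exact/measurableC/measurableD.
    apply: measurable_slice; apply: measurableU => //; exact: measurableX.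
  move=> c /= nG; have [Tyc|nTyc] := pselect (T (y, c)); first by left.
  right; split => //; apply: contrapT => nUc; apply: nG; split => //.
  by rewrite /xsection/= inE.
Qed.

Lemma feinstein_step (U : set Y) : measurable U ->
  outdist P F U + joint_out P f F T < (eps * lam)%:E ->
  exists y G A, feinstein_codeword y G A /\ G `&` U = set0.
Proof.
move=> mU small; apply: contrapT => no_codeword.
set D := low_error_inputs U.
have mD : measurable D := measurable_low_error_inputs mU.
have mW : measurable (T `|` setT `*` U).
  by apply: measurableU => //; exact: measurableX.
have PD : P D <= (1 - lam)%:E.
  have := hQ mD measurableT; rewrite preimage_setT setIT => ->.
  rewrite -[leRHS]mule1 -(@probability_setT _ _ _ (distribution P f)).
  rewrite -integral_cst//; apply: ae_ge0_le_integral => //.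
  - exact: measurable_kernel.
  - by move=> y _; rewrite lee_fin subr_ge0.
  - exact: filterS (rcd_low_error_inputs_le mU no_codeword) => y + _.
have lam_le : lam%:E <= P (~` D).
  rewrite probability_setC//; move: PD.
  have /fineK <- := fin_num_measure P _ mD.
  by rewrite -EFinB !lee_fin => PD; lra.
have : (eps * lam)%:E <= joint_out P f F (T `|` setT `*` U).
  rewrite EFinM; apply: le_trans (lee_wpmul2l _ lam_le) _.
    by rewrite lee_fin.
  rewrite -integral_cst; last exact: measurableC.
  apply: le_trans (ge0_subset_integral _ _ measurableT _ _ (@subsetT _ _));
    rewrite //.
  - apply: ge0_le_integral => //.
    + exact/measurableC.
    + apply: (measurable_funS measurableT) => //.
      exact: measurable_fun_kernel_slice.
    + by move=> x /= /negP; rewrite -ltNge => /ltW.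
  - exact: measurableC.
  - exact: measurable_fun_kernel_slice.
apply/negP; rewrite -ltNge; apply: le_lt_trans small.
rewrite addeC -(joint_out_setTX P f F).
by apply: joint_outU => //; exact: measurableX.
Qed.

Lemma feinstein_codebook (M : nat) : (0 < delta)%R ->
  (eps * lam)%:E = (M%:R * delta)%:E + joint_out P f F T ->
  exists (y : nat -> Z) (G : nat -> set Y) (A : nat -> set X),
    forall j, (j < M)%N -> feinstein_codeword (y j) (G j) (A j) /\
      forall i, (i < j)%N -> G i `&` G j = set0.
Proof.
move=> delta_gt0 budget.
have JT_fin : joint_out P f F T \is a fin_num.
  have : (eps * lam)%:E \is a fin_num by [].
  by rewrite budget fin_numD => /andP[].
suff : forall k, (k <= M)%N -> exists (y : nat -> Z) (G : nat -> set Y)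
    (A : nat -> set X), forall j, (j < k)%N ->
    feinstein_codeword (y j) (G j) (A j) /\
    forall i, (i < j)%N -> G i `&` G j = set0 by exact.
elim=> [|k IH] kM; first by exists (fun=> point), (fun=> set0), (fun=> set0).
have [y [G [A cb]]] := IH (ltnW kM).
have mG i : (i < k)%N -> measurable (G i) by case/cb => -[].
pose U := \big[setU/set0]_(i < k) G i.
have mU : measurable U by apply: bigsetU_measurable => i _; exact: mG.
have nuU : outdist P F U <= (k%:R * delta)%:E.
  apply: le_trans
    (content_subadditive (outdist P F) (F := G) (n := k) _ mU _) _.
  - by move=> i /= ik; exact: mG.
  - exact: subset_refl.
  - have -> : (k%:R * delta)%:E = \sum_(i < k) delta%:E.
      by rewrite sumEFin sumr_const card_ord mulr_natl.
    by apply: lee_sum => i _; have [[]] := cb i (ltn_ord i).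
have small : outdist P F U + joint_out P f F T < (eps * lam)%:E.
  rewrite budget lteD2rE//; apply: le_lt_trans nuU _.
  by rewrite lte_fin ltr_pM2r// ltr_nat.
have [y' [G' [A' [cw G'U]]]] := feinstein_step mU small.
exists (fun j => if j == k then y' else y j),
  (fun j => if j == k then G' else G j),
  (fun j => if j == k then A' else A j) => j; rewrite ltnS leq_eqVlt.
case/orP => [/eqP ->|jk]; rewrite ?eqxx ?(ltn_eqF jk); last first.
  have [cwj disj] := cb j jk; split => // i ij.
  by rewrite (ltn_eqF (ltn_trans ij jk)); exact: disj.
split => // i ik; rewrite (ltn_eqF ik); apply/seteqP; split => // c [Gic G'c].
by rewrite -G'U; split => //; exact: (bigsetU_sup ik Gic).
Qed.

End feinstein.

Unset Implicit Arguments. Set Strict Implicit.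
Local Close Scope ereal_scope.

Theorem lemma14 (R : realType) (dA dB dC : measure_display)
  (A : measurableType dA) (B : measurableType dB) (C : measurableType dC)
  (stdA : standard_borel R A) (stdB : standard_borel R B)
  (cntB : countable [set: B]) (stdC : standard_borel R C)
  (f : {mfun seqspace A >-> seqspace B})
  (F : R.-pker seqspace A ~> seqspace C)
  (P : probability (seqspace A) R)
  (hac : joint_out P f F `<< (distribution P f \x outdist P F)%E)
  (g : seqspace B * seqspace C -> \bar R)
  (hg : is_RN_derivative (joint_out P f F)
          (distribution P f \x outdist P F)%E g)
  (Q : R.-pker seqspace B ~> seqspace A) (hQ : is_rcd P f Q)
  (M : nat) (a eps lam : R) (ha : 0 < a)
  (hsmall : ((M%:R * expR (- a))%:E
             + joint_out P f F [set z | eln (g z) <= a%:E] < (4^-1)%:E)%E)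
  (heps : 0 < eps < 2^-1) (hlam : 0 < lam < 2^-1)
  (hel : (eps * lam)%:E = ((M%:R * expR (- a))%:E
             + joint_out P f F [set z | eln (g z) <= a%:E])%E) :
  exists (y : 'I_M -> seqspace B) (Gam : 'I_M -> set (seqspace C))
         (Ak : 'I_M -> set (seqspace A)),
    [/\ forall k, measurable (Gam k),
        forall k l, k != l -> Gam k `&` Gam l = set0 &
        forall k,
          [/\ measurable (Ak k),
              Ak k `<=` f @^-1` [set y k],
              ((1 - lam)%:E < Q (y k) (Ak k))%E &
              forall x, Ak k x -> (F x (~` Gam k) <= eps%:E)%E]].
Proof.
have mB1 := standard_borel_measurable_set1 stdB.
set T := [set z | (eln (g z) <= a%:E)%E] in hel *.
have [mg g_ge0 _] := hg.
have TC : ~` T = [set z | ((expR a)%:E < g z)%E].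
  by apply/seteqP; split => z; rewrite /T /= eln_le_expR// ltNge => /negP.
have mT : measurable T.
  by rewrite -[T]setCK TC; apply/measurableC; rewrite -[X in _ X]setTI;
    exact: emeasurable_fun_o_infty.
have T_section : {ae distribution P f,
    forall y, (outdist P F (xsection (~` T) y) <= (expR (- a))%:E)%E}.
  by rewrite TC expRN; exact: ae_outdist_section_le hg (expR_gt0 a).
have eps_ge0 : 0 <= eps by case/andP: heps => /ltW.
have lam_le1 : lam <= 1 by case/andP: hlam => _; lra.
have [y [G [Ak cb]]] := feinstein_codebook hQ (seqspace_measurable_set1 mB1)
  (rcd_ae_fiber mB1 cntB hQ) mT T_section eps_ge0 lam_le1 (expR_gt0 _) hel.
exists (fun k => y k), (fun k => G k), (fun k => Ak k); split.
- by move=> k; have [[]] := cb k (ltn_ord k).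
- move=> k l; rewrite neq_ltn => /orP[] kl.
    by have [_] := cb l (ltn_ord l); apply.
  by rewrite setIC; have [_] := cb k (ltn_ord k); apply.
- by move=> k; have [[_ _ ? ? []]] := cb k (ltn_ord k).
Qed.
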